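(* Let $n \geq 3$ and let $(\lambda(1),\dots,\lambda(n))$ be Kerov's growth process. Let $X_n = c(x)$, where $x$ is the box added to $\lambda(n-1)$ to obtain $\lambda(n)$, and let $T_{n-1} = \frac{\sqrt{\binom{n-1}{2}}\,\chi^{\lambda(n-1)}((12))}{\dim(\lambda(n-1))} = \binom{n-1}{2}^{-1/2}\sum_{y\in\lambda(n-1)} c(y)$. Then \begin{enumerate} \item $\mathbb{E}(|X_n|^3) \leq (n-1)\sqrt{2n-3}$; \item $\mathbb{E}(|T_{n-1}|\,|X_n|^3) \leq (n-1)\sqrt{2n-3}$. \end{enumerate}
   Context: For a partition $\mu$, $\dim(\mu)$ is the dimension of the irreducible representation of the symmetric group indexed by $\mu$ and $\chi^\mu$ its character. Kerov's growth process is the Markov chain $(\lambda(1),\dots,\lambda(n))$ where $\lambda(1)$ is the unique partition of $1$ and, given $\lambda(j)$, the partition $\lambda(j+1)$ of $j+1$ is chosen with probability $\frac{\dim(\lambda(j+1))}{(j+1)\dim(\lambda(j))}$ if $\lambda(j+1)$ is obtained from $\lambda(j)$ by adding a single box, and probability $0$ otherwise; each $\lambda(j)$ is then Plancherel distributed on partitions of $j$. The content of a box $x$ is $c(x) = (\text{column number of } x) - (\text{row number of } x)$. *)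

From mathcomp Require Import all_boot all_order all_algebra.
Unset Printing Implicit Defensive.
Import Order.TTheory GRing.Theory Num.Theory.

(* Partitions are represented as weakly decreasing sequences of positive
   naturals (row lengths, top row first).  Row i (0-indexed) is row number
   i+1; the box in row number r and column number c has content c - r. *)
Definition is_part (s : seq nat) : bool :=
  sorted (fun x y => y <= x) s && all (fun x => 0 < x) s.

Definition adds_box (l m : seq nat) : bool :=
  [&& is_part l, is_part m & has (fun i => m == incr_nth l i) (iota 0 (size l).+1)].

Definition build (w : seq nat) : seq nat := foldl incr_nth [::] w.

Definition lattice_word (w : seq nat) : bool :=
  all (fun k => is_part (build (take k w))) (iota 0 (size w).+1).

(* dim(mu) = number of standard Young tableaux of shape mu, i.e. the number
   of lattice words building mu (= dimension of the irreducible
   representation of S_|mu| indexed by mu). *)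
Definition dim (mu : seq nat) : nat :=
  #|[pred w : (sumn mu).-tuple 'I_(sumn mu) |
      lattice_word (map val w) && (build (map val w) == mu)]|.

Local Open Scope ring_scope.

Definition kerov_trans (R : rcfType) (j : nat) (l m : seq nat) : R :=
  if adds_box l m then (dim m)%:R / ((j.+1 * dim l)%N)%:R else 0.

Definition path_of (w : seq nat) (j : nat) : seq nat := build (take j w).

Definition kerov_path_prob (R : rcfType) (n : nat) (lam : nat -> seq nat) : R :=
  (lam 1%N == [:: 1%N])%:R * \prod_(1 <= j < n) kerov_trans R j (lam j) (lam j.+1).

(* The sample space is enumerated through words w in {0..n-1}^n
   (lambda(j) = shape built by the first j letters); every path in the
   support of the chain arises from exactly one such word, and every other
   word gets probability 0. *)
Definition kerov_E (R : rcfType) (n : nat) (F : (nat -> seq nat) -> R) : R :=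
  \sum_(w : n.-tuple 'I_n)
     kerov_path_prob R n (path_of (map val w)) * F (path_of (map val w)).

Definition added_content (R : rcfType) (l m : seq nat) : R :=
  let i := find (fun i => nth 0%N l i != nth 0%N m i) (iota 0 (size m)) in
  (nth 0%N m i)%:R - (i.+1)%:R.

Definition content_sum (R : rcfType) (l : seq nat) : R :=
  \sum_(i < size l) \sum_(1 <= c < (nth 0%N l i).+1) ((c%:R : R) - (i.+1)%:R).

Definition X_n (R : rcfType) (n : nat) (lam : nat -> seq nat) : R :=
  added_content R (lam n.-1) (lam n).

Definition T_nm1 (R : rcfType) (n : nat) (lam : nat -> seq nat) : R :=
  (Num.sqrt ('C(n.-1, 2))%:R)^-1 * content_sum R (lam n.-1).

(* Let m = n - 1. Given lambda(m) = l, the box added by the growth process lies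
   in row a with probability dim (l + a) / ((m + 1) dim l) and has content c_a,
   so every moment of X_n is an average over l of a sum
   S_f(l) = sum_a dim (l + a) f(c_a). Expanding dim (l + a) by the branching
   rule dim L = sum_b dim (L - b) and matching the pairs in which the added and
   the removed box lie in different rows (these operations commute) gives
     S_f(l) = (sum_a f(c_a) - sum_b f(c_b - 1)) dim l + sum_b S_f(l - b).
   The corner difference in parentheses telescopes row by row to f(0) plus the
   sum over the boxes of l of the second difference of f, which is constant for
   f = 1, x, x^2 and equals 12 x^2 + 2 for f = x^4. Induction on m, together with
   sum_l dim(l)^2 = m!, yields E X_n^2 = m, E X_n^4 = m (2m - 1) and
   E T_{n-1}^2 X_n^2 = m. Both bounds then follow from
   2 s U X^2 <= s^2 U^2 + X^4 with s = sqrt(2m - 1), for U = |X_n| and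
   U = |T_{n-1} X_n|. *)

From Pilot Require Import Defs.
From mathcomp Require Import all_boot all_order all_algebra.
From mathcomp Require Import ring lra zify.
Import Order.TTheory GRing.Theory Num.Theory.

Set Implicit Arguments.
Unset Strict Implicit.

Lemma is_partP s : reflect ((forall i, nth 0 s i.+1 <= nth 0 s i) /\
   (forall i, i < size s -> 0 < nth 0 s i)) (is_part s).
Proof.
apply: (iffP andP) => [[/(sortedP 0) srt /(all_nthP 0) pos]|[srt pos]].
  split=> // i; case: (ltnP i.+1 (size s)) => hi; first exact: srt.
  by rewrite (nth_default 0 hi).
by split; [apply/(sortedP 0) => i _; apply: srt | apply/(all_nthP 0)].
Qed.

Section Partition.
Variable l : seq nat.
Hypothesis pl : is_part l.

Lemma part_nthS_le i : nth 0 l i.+1 <= nth 0 l i.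
Proof. by case/is_partP: pl. Qed.

Lemma part_nth_le i j : i <= j -> nth 0 l j <= nth 0 l i.
Proof.
move/subnKC <-; elim: (j - i) => [|k IH]; first by rewrite addn0.
by rewrite addnS (leq_trans (part_nthS_le _)).
Qed.

Lemma part_nth_gt0 i : (0 < nth 0 l i) = (i < size l).
Proof.
case/is_partP: pl => _ pos; case: (ltnP i (size l)) => hi; first exact: pos.
by rewrite nth_default.
Qed.

Lemma size_le_sumn_part : size l <= sumn l.
Proof.
case/andP: pl => _; elim: (l) => //= x s IH /andP[x_gt0 /IH]; lia.
Qed.

Lemma is_part_incr_nth a :
  is_part (incr_nth l a) = (a == 0) || (nth 0 l a < nth 0 l a.-1).
Proof.
apply/idP/idP.
  case: a => [//|a] /is_partP[srt _]; move: (srt a).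
  by rewrite !nth_incr_nth eqxx (gtn_eqF (ltnSn a)).
move=> h; apply/is_partP; split=> i.
  rewrite !nth_incr_nth; have := part_nthS_le i.
  case: (eqVneq a i.+1) => [ai|]; last by case: (a == i) => /=; lia.
  by move: h; rewrite ai /= eqn_leq ltnn /=; lia.
rewrite size_incr_nth nth_incr_nth.
case: (ltnP i (size l)) => [his _|his]; first by rewrite -part_nth_gt0 in his; lia.
case: ifP => ha hi; first lia.
case: (eqVneq a i) => [//|ne]; move: h.
by rewrite !nth_default //; lia.
Qed.

Lemma incr_nth_part_le_size a : is_part (incr_nth l a) -> a <= size l.
Proof. by rewrite is_part_incr_nth; case: a => //= a; rewrite -part_nth_gt0; lia. Qed.

End Partition.

Lemma eq_part p q : is_part p -> is_part q -> nth 0 p =1 nth 0 q -> p = q.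
Proof.
move=> pp pq epq; apply: (@eq_from_nth _ 0) => [|i _]; last exact: epq.
have esize i : (i < size p) = (i < size q) by rewrite -part_nth_gt0 // epq part_nth_gt0.
by case: (ltngtP (size p) (size q)) => // h; [move: (esize (size p)) | move: (esize (size q))];
  rewrite h ltnn.
Qed.

Lemma sumn_incr_nth l a : sumn (incr_nth l a) = (sumn l).+1.
Proof.
elim: l a => [|x l IH] [|a] //=; last by rewrite IH addnS.
by elim: a => //= a ->.
Qed.

Definition removable (l : seq nat) b := nth 0 l b.+1 < nth 0 l b.

(* An emptied row is dropped, so that no trailing zero is created. *)
Definition remove_box (l : seq nat) b :=
  if nth 0 l b == 1 then take b l else set_nth 0 l b (nth 0 l b).-1.

Section RemoveBox.
Variables (l : seq nat) (b : nat).
Hypotheses (pl : is_part l) (rb : removable l b).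

Lemma removable_lt_size : b < size l.
Proof. by rewrite -part_nth_gt0 //; move: rb; rewrite /removable; lia. Qed.

Lemma nth_remove_box i : nth 0 (remove_box l b) i = nth 0 l i - (i == b).
Proof.
rewrite /remove_box; case: eqP => [lb1|_]; last first.
  by rewrite nth_set_nth /=; case: (eqVneq i b) => [->|]; lia.
case: (ltnP i b) => hib; first by rewrite nth_take // (ltn_eqF hib) subn0.
rewrite nth_default; last by rewrite size_take; case: ltnP; lia.
case: (eqVneq i b) => [->|ne]; first by rewrite lb1.
have := part_nth_le pl (_ : b.+1 <= i); move: rb; rewrite /removable; lia.
Qed.

Lemma size_remove_box : size (remove_box l b) <= size l.
Proof.
rewrite /remove_box; case: eqP => _; last by rewrite size_set_nth; have := removable_lt_size; lia.
by rewrite size_take; case: ltnP; lia.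
Qed.

Lemma is_part_remove_box : is_part (remove_box l b).
Proof.
have bl := removable_lt_size; move: rb; rewrite /removable => lt_b.
apply/is_partP; split=> [i|i hi].
  rewrite !nth_remove_box; have := part_nthS_le pl i.
  case: (i.+1 =P b) => [<-|_]; first by rewrite (ltn_eqF (ltnSn i)) /=; lia.
  by case: (i =P b) => [->|_] /=; lia.
have il : i < size l by have := size_remove_box; lia.
rewrite nth_remove_box; rewrite -(part_nth_gt0 pl) in il.
case: (i =P b) => [eib|] /=; last lia.
move: hi; rewrite /remove_box eib; case: eqP => [_|]; last lia.
by rewrite size_take bl ltnn.
Qed.

Lemma remove_boxK : incr_nth (remove_box l b) b = l.
Proof.
have lt_b : 0 < nth 0 l b by move: rb; rewrite /removable; lia.
have pi : is_part (incr_nth (remove_box l b) b).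
  rewrite is_part_incr_nth ?is_part_remove_box // !nth_remove_box eqxx.
  have := part_nth_le pl (leq_pred b).
  by case: (posnP b) => [-> //| b_gt0]; rewrite (ltn_eqF (_ : b.-1 < b)) ?orFb; lia.
apply: eq_part pi pl _ => i.
by rewrite nth_incr_nth nth_remove_box eq_sym; case: eqP => [->|]; lia.
Qed.

Lemma sumn_remove_box : sumn (remove_box l b) = (sumn l).-1.
Proof. by rewrite -{2}remove_boxK sumn_incr_nth. Qed.

End RemoveBox.

Section AddBox.
Variables (l : seq nat) (a : nat).
Hypotheses (pl : is_part l) (pa : is_part (incr_nth l a)).

Lemma removable_incr_nth : removable (incr_nth l a) a.
Proof.
rewrite /removable !nth_incr_nth eqxx; have := part_nthS_le pl a.
by rewrite (ltn_eqF (ltnSn a)); lia.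
Qed.

Lemma incr_nthK : remove_box (incr_nth l a) a = l.
Proof.
apply: eq_part (is_part_remove_box _ removable_incr_nth) pl _ => // i.
by rewrite nth_remove_box // ?removable_incr_nth // nth_incr_nth eq_sym; case: eqP; lia.
Qed.

End AddBox.

Definition addable_rows l := [seq a <- iota 0 (size l).+1 | is_part (incr_nth l a)].

Definition removable_rows l := [seq b <- iota 0 (size l) | removable l b].

Lemma mem_addable_rows l a : is_part l -> (a \in addable_rows l) = is_part (incr_nth l a).
Proof.
move=> pl; rewrite mem_filter mem_iota ltnS /=; case pa: (is_part _) => //=.
exact: incr_nth_part_le_size pa.
Qed.

Lemma mem_removable_rows l b : is_part l -> (b \in removable_rows l) = removable l b.
Proof.
move=> pl; rewrite mem_filter mem_iota /=; case rb: (removable l b) => //=.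
exact: removable_lt_size rb.
Qed.

Lemma incr_nth_eq_remove_box l L a : is_part l -> is_part L ->
  is_part (incr_nth l a) && (incr_nth l a == L) = removable L a && (l == remove_box L a).
Proof.
move=> pl pL; apply/andP/andP => [[pa /eqP <-]|[rL /eqP ->]].
  by rewrite removable_incr_nth // incr_nthK.
by rewrite remove_boxK.
Qed.

Section AddRemove.
Variables (l : seq nat) (a b : nat).
Hypotheses (pl : is_part l) (ab : a != b).

Lemma addable_removableC :
  is_part (incr_nth l a) && removable (incr_nth l a) b =
  removable l b && is_part (incr_nth (remove_box l b) a).
Proof.
case rb: (removable l b) => /=; last first.
  apply/negbTE/nandP; right; move: rb; rewrite /removable !nth_incr_nth (negbTE ab).
  by case: (a == b.+1) => /=; lia.
have pr := is_part_remove_box pl rb.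
rewrite is_part_incr_nth // is_part_incr_nth // /removable !nth_incr_nth.
rewrite !nth_remove_box // (negbTE ab) subn0 /=; move: rb; rewrite /removable => rb.
case: (a =P b.+1) => [->|ne2] /=; first by rewrite eqxx; apply/idP/idP; lia.
rewrite add0n rb andbT; case: (posnP a) => [-> //|a_gt0].
by rewrite (_ : (a.-1 == b) = false) ?subn0 //; apply/eqP => eab; apply: ne2; lia.
Qed.

Lemma remove_box_incr_nthC :
  is_part (incr_nth l a) -> removable (incr_nth l a) b ->
  remove_box (incr_nth l a) b = incr_nth (remove_box l b) a.
Proof.
move=> pa ra; have := addable_removableC; rewrite pa ra /= => /esym/andP[rb pra].
apply: eq_part pra _ => [|i]; first exact: is_part_remove_box.
rewrite nth_remove_box // !nth_incr_nth nth_remove_box //.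
by case: (i =P b) => [->|_]; rewrite ?(negbTE ab) /= ?subn0 //; move: rb; rewrite /removable; lia.
Qed.

End AddRemove.

Lemma build_rcons s a : build (rcons s a) = incr_nth (build s) a.
Proof. by rewrite /build foldl_rcons. Qed.

Lemma sumn_build s : sumn (build s) = size s.
Proof.
by elim/last_ind: s => //= s a IH; rewrite build_rcons sumn_incr_nth IH size_rcons.
Qed.

Lemma lattice_word_rcons s a :
  lattice_word (rcons s a) = lattice_word s && is_part (build (rcons s a)).
Proof.
rewrite /lattice_word size_rcons -addn1 iotaD all_cat add0n all_seq1.
congr andb; last by rewrite take_oversize // size_rcons.
apply: eq_in_all => k; rewrite mem_iota add0n => /andP[_ hk].
by rewrite -cats1 takel_cat.
Qed.

Lemma lattice_word_part s : lattice_word s -> is_part (build s).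
Proof.
by move/allP/(_ (size s)); rewrite take_size mem_iota ltnS leqnn; apply.
Qed.

Fixpoint lattice_words m : seq (seq nat) :=
  if m is m'.+1 then
    [seq rcons s a | s <- lattice_words m', a <- addable_rows (build s)]
  else [:: [::]].

Lemma lattice_wordsS m : lattice_words m.+1 =
  [seq rcons s a | s <- lattice_words m, a <- addable_rows (build s)].
Proof. by []. Qed.

Lemma lattice_wordsP m s :
  reflect (lattice_word s /\ size s = m) (s \in lattice_words m).
Proof.
elim: m s => [|m IH] s.
  rewrite inE; apply: (iffP eqP) => [->|[_ /size0nil //]].
  by split=> //; rewrite /lattice_word /= /build /is_part.
apply: (iffP allpairsPdep) => [[s' [a [/IH [ls' ss'] + ->]]]|[ls ss]].
  rewrite mem_addable_rows ?lattice_word_part // => pa.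
  by rewrite lattice_word_rcons build_rcons pa ls' size_rcons ss'.
case/lastP: s ls ss => [//|s a]; rewrite lattice_word_rcons size_rcons build_rcons.
case/andP=> ls pa [ss]; exists s, a; split=> //; first exact/IH.
by rewrite mem_addable_rows // lattice_word_part.
Qed.

Lemma adds_box_incr_nth l a : is_part l -> adds_box l (incr_nth l a) = is_part (incr_nth l a).
Proof.
move=> pl; rewrite /adds_box pl !andTb; case pa: (is_part _) => //.
by apply/hasP; exists a; rewrite // mem_iota ltnS (incr_nth_part_le_size pl pa).
Qed.

Section BigTuples.
Variables (V : Type) (idx : V) (op : Monoid.com_law idx).

Lemma big_iota_ord_widen n N (P : pred nat) (F : nat -> V) :
  n <= N -> (forall a, P a -> a < n) ->
  \big[op/idx]_(a <- iota 0 n | P a) F a = \big[op/idx]_(a < N | P a) F a.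
Proof.
move=> le_nN Pn; rewrite -[n in iota 0 n]subn0 -/(index_iota 0 n) big_mkord.
rewrite (big_ord_widen_cond N _ _ le_nN).
by apply: eq_bigl => a; case: (boolP (P a)) => // /Pn ->.
Qed.

Lemma big_seq_pred1 (T : eqType) (r : seq T) x (F : T -> V) :
  uniq r -> x \in r -> \big[op/idx]_(y <- r | y == x) F y = F x.
Proof. by move=> ur xr; rewrite -big_filter filter_pred1_uniq // big_seq1. Qed.

Lemma big_tuple0 (T : finType) (F : 0.-tuple T -> V) :
  \big[op/idx]_(t : 0.-tuple T) F t = F [tuple].
Proof. by apply: big_pred1 => t; apply/esym/eqP; apply: tuple0. Qed.

Lemma big_tuple_cons (T : finType) m (F : seq T -> V) :
  \big[op/idx]_(t : m.+1.-tuple T) F t =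
  \big[op/idx]_(x : T) \big[op/idx]_(t : m.-tuple T) F (x :: t).
Proof.
rewrite pair_big /= (reindex (fun p : T * m.-tuple T => [tuple of p.1 :: p.2])) //=.
exists (fun t => (thead t, behead_tuple t)) => [[x t] _|t _] /=.
  by congr pair; apply: val_inj.
by case/tupleP: t => x t; apply: val_inj.
Qed.

Lemma big_tuple_rcons (T : finType) m (F : seq T -> V) :
  \big[op/idx]_(t : m.+1.-tuple T) F t =
  \big[op/idx]_(t : m.-tuple T) \big[op/idx]_(x : T) F (rcons t x).
Proof.
elim: m F => [|m IH] F.
  by rewrite big_tuple_cons big_tuple0; apply: eq_bigr => x _; rewrite big_tuple0.
rewrite big_tuple_cons (big_tuple_cons _ (fun t => \big[op/idx]_(y : T) F (rcons t y))).
by apply: eq_bigr => x _; rewrite (IH (fun t => F (x :: t))).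
Qed.

Lemma big_addable_rows l N (P : pred nat) (F : nat -> V) : is_part l -> size l < N ->
  \big[op/idx]_(a <- addable_rows l | P a) F a =
  \big[op/idx]_(a < N | is_part (incr_nth l a) && P a) F a.
Proof.
move=> pl lt_lN; rewrite big_filter_cond (big_iota_ord_widen _ (N := N)) //.
by move=> a /andP[/(incr_nth_part_le_size pl)].
Qed.

Lemma big_removable_rows l N (P : pred nat) (F : nat -> V) : is_part l -> size l <= N ->
  \big[op/idx]_(b <- removable_rows l | P b) F b =
  \big[op/idx]_(b < N | removable l b && P b) F b.
Proof.
move=> pl le_lN; rewrite big_filter_cond (big_iota_ord_widen _ (N := N)) //.
by move=> b /andP[/(removable_lt_size pl)].
Qed.

Lemma big_lattice_tuples N m (F : seq nat -> V) : m <= N ->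
  \big[op/idx]_(t : m.-tuple 'I_N | lattice_word (map val t)) F (map val t) =
  \big[op/idx]_(s <- lattice_words m) F s.
Proof.
elim: m F => [|m IH] F le_mN.
  by rewrite big_mkcond big_tuple0 big_seq1.
rewrite big_mkcond (big_tuple_rcons _ (fun t => if lattice_word (map val t)
  then F (map val t) else idx)) lattice_wordsS big_allpairs_dep.
rewrite -IH 1?ltnW // [RHS]big_mkcond; apply: eq_bigr => t _.
under eq_bigr do rewrite map_rcons lattice_word_rcons build_rcons.
case: ifP => lt; last by rewrite big1.
have pt := lattice_word_part lt.
rewrite (big_addable_rows _ (N := N)) //; last first.
  by have := size_le_sumn_part pt; rewrite sumn_build size_map size_tuple; lia.
by symmetry; rewrite big_mkcond; apply: eq_bigr => a _; rewrite andbT.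
Qed.

End BigTuples.

Lemma build_lattice_word l : is_part l -> exists2 s, lattice_word s & build s = l.
Proof.
move: {2}(sumn l) (erefl (sumn l)) => n; elim: n l => [|n IH] l sl pl.
  have := size_le_sumn_part pl; rewrite sl leqn0 => /nilP ->.
  by exists [::].
have size_gt0 : 0 < size l by case: (l) sl.
have rl : removable l (size l).-1.
  by rewrite /removable prednK // nth_default // (part_nth_gt0 pl) prednK.
have [s ls bs] := IH _ (etrans (sumn_remove_box pl rl) (congr1 predn sl))
  (is_part_remove_box pl rl).
exists (rcons s (size l).-1); last by rewrite build_rcons bs remove_boxK.
by rewrite lattice_word_rcons ls build_rcons bs remove_boxK.
Qed.

Definition partitions m := undup [seq build s | s <- lattice_words m].

Lemma partitions0 : partitions 0 = [:: [::]].
Proof. by []. Qed.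

Lemma partitions_uniq m : uniq (partitions m).
Proof. exact: undup_uniq. Qed.

Lemma mem_partitions m l : (l \in partitions m) = is_part l && (sumn l == m).
Proof.
rewrite mem_undup; apply/mapP/andP => [[s /lattice_wordsP [ls <-] ->]|[pl /eqP <-]].
  by rewrite lattice_word_part // sumn_build.
have [s ls <-] := build_lattice_word pl.
by exists s => //; apply/lattice_wordsP; rewrite sumn_build.
Qed.

Lemma dimE l : Defs.dim l = count (fun s => build s == l) (lattice_words (sumn l)).
Proof.
rewrite /Defs.dim -sum1_card -sum1_count big_mkcondr /=.
by rewrite (big_lattice_tuples _ (fun s => if build s == l then 1 else 0)) // [RHS]big_mkcond.
Qed.

Lemma dim_gt0 l : is_part l -> 0 < Defs.dim l.
Proof.
move=> pl; have [s ls bs] := build_lattice_word pl.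
rewrite dimE -has_count; apply/hasP; exists s; last exact/eqP.
by apply/lattice_wordsP; rewrite -bs sumn_build.
Qed.

Lemma dim_nil : Defs.dim [::] = 1.
Proof. by rewrite dimE. Qed.

Lemma dim1 : Defs.dim [:: 1] = 1.
Proof. by rewrite dimE. Qed.

Local Open Scope ring_scope.

(** * The branching rule *)

Section Branching.
Variable R : comPzRingType.
Local Notation dimr l := ((Defs.dim l)%:R : R).

Lemma sum_lattice_words_build m (H : seq nat -> R) :
  \sum_(s <- lattice_words m) H (build s) = \sum_(l <- partitions m) dimr l * H l.
Proof.
transitivity (\sum_(l <- partitions m) \sum_(s <- lattice_words m | build s == l) H l).
  rewrite (exchange_big_dep xpredT) //=; apply: eq_big_seq => s /lattice_wordsP[ls ss].
  under eq_bigl do rewrite eq_sym.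
  by rewrite big_seq_pred1 ?partitions_uniq // mem_partitions lattice_word_part // sumn_build ss eqxx.
apply: eq_big_seq => l; rewrite mem_partitions => /andP[_ /eqP sl].
by rewrite dimE sl -sum1_count natr_sum mulr_suml; apply: eq_bigr => s _; rewrite mul1r.
Qed.

Lemma sum_dim_partitionsS m (G : seq nat -> R) :
  \sum_(L <- partitions m.+1) dimr L * G L =
  \sum_(l <- partitions m) dimr l * \sum_(a <- addable_rows l) G (incr_nth l a).
Proof.
rewrite -!sum_lattice_words_build lattice_wordsS big_allpairs_dep.
by apply: eq_bigr => s _; apply: eq_bigr => a _; rewrite build_rcons.
Qed.

Lemma sum_incr_nth_eq m L (G : seq nat -> nat -> R) : L \in partitions m.+1 ->
  \sum_(l <- partitions m) \sum_(a <- addable_rows l | incr_nth l a == L) G l a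
  = \sum_(b <- removable_rows L) G (remove_box L b) b.
Proof.
rewrite mem_partitions => /andP[pL /eqP sL].
have size_L : (size L <= m.+1)%N by rewrite -sL size_le_sumn_part.
rewrite (big_removable_rows _ (N := m.+2)) //; last exact: leqW.
transitivity (\sum_(l <- partitions m)
  \sum_(a < m.+2 | is_part (incr_nth l a) && (incr_nth l a == L)) G l a).
  apply: eq_big_seq => l; rewrite mem_partitions => /andP[pl /eqP sl].
  by rewrite (big_addable_rows _ (N := m.+2)) // ltnS -sl (leq_trans (size_le_sumn_part pl)).
rewrite big_seq_cond (exchange_big_dep (fun a : 'I_m.+2 => removable L a)) /=; last first.
  move=> l a; rewrite andbT mem_partitions => /andP[pl _] /andP[pa /eqP <-].
  exact: removable_incr_nth.
apply: eq_big => [a|a rLa]; first by rewrite andbT.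
have mLa : remove_box L a \in partitions m.
  by rewrite mem_partitions is_part_remove_box //= sumn_remove_box // sL.
rewrite (eq_bigl (fun l => l == remove_box L a)) ?big_seq_pred1 ?partitions_uniq // => l.
rewrite andbT; case: (boolP (l \in partitions m)) => [|lP] /=.
  by rewrite mem_partitions => /andP[pl _]; rewrite incr_nth_eq_remove_box // rLa.
by apply/esym/eqP => e; rewrite e mLa in lP.
Qed.

Lemma dim_remove_boxE m L : L \in partitions m.+1 ->
  dimr L = \sum_(b <- removable_rows L) dimr (remove_box L b).
Proof.
move=> PL; rewrite -(sum_incr_nth_eq (fun l _ => dimr l) PL).
transitivity (\sum_(L' <- partitions m.+1) dimr L' * (L' == L)%:R).
  rewrite (bigD1_seq L) ?partitions_uniq //= eqxx mulr1 big1 ?addr0 // => L'.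
  by move/negbTE ->; rewrite mulr0.
rewrite sum_dim_partitionsS; apply: eq_bigr => l _.
rewrite mulr_sumr [RHS]big_mkcond; apply: eq_bigr => a _.
by case: eqP; rewrite ?mulr1 ?mulr0.
Qed.

Lemma sum_remove_box_add_box m (H : seq nat -> seq nat -> nat -> R) :
  \sum_(L <- partitions m.+1) \sum_(b <- removable_rows L) H L (remove_box L b) b =
  \sum_(l <- partitions m) \sum_(a <- addable_rows l) H (incr_nth l a) l a.
Proof.
transitivity (\sum_(L <- partitions m.+1) \sum_(l <- partitions m)
  \sum_(a <- addable_rows l | incr_nth l a == L) H (incr_nth l a) l a).
  apply: eq_big_seq => L PL; rewrite (sum_incr_nth_eq (fun l a => H (incr_nth l a) l a) PL).
  move: PL; rewrite mem_partitions => /andP[pL _].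
  by apply: eq_big_seq => b; rewrite mem_removable_rows // => rb; rewrite remove_boxK.
rewrite exchange_big /=; apply: eq_big_seq => l; rewrite mem_partitions => /andP[pl /eqP sl].
rewrite (exchange_big_dep xpredT) //=; apply: eq_big_seq => a; rewrite mem_addable_rows // => pa.
rewrite (eq_bigl (fun L => L == incr_nth l a)) => [|L]; last exact: eq_sym.
by rewrite big_seq_pred1 ?partitions_uniq // mem_partitions pa sumn_incr_nth sl eqxx.
Qed.

End Branching.

(** * Transition sums and corner differences *)

Lemma sumr_offdiag_eq (V : zmodType) (K : nat) (X Y : nat -> nat -> V) :
  (forall a b, a != b -> X a b = Y a b) ->
  \sum_(a < K) \sum_(b < K) X a b - \sum_(a < K) \sum_(b < K) Y a b =
  \sum_(a < K) X a a - \sum_(a < K) Y a a.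
Proof.
move=> XY; rewrite -!sumrB; apply: eq_bigr => a _.
rewrite -sumrB (bigD1 a) //= big1 ?addr0 // => b ba.
by rewrite XY ?subrr // eq_sym.
Qed.

Section TransitionSums.
Variable R : comPzRingType.
Local Notation dimr l := ((Defs.dim l)%:R : R).

Definition add_content (l : seq nat) a : R := (nth 0%N l a)%:R - a%:R.

(* For a partition l of m, (m + 1) dim l times the expected value of f at the
   content of the box the growth process adds to l. *)
Definition trans_sum (f : R -> R) l :=
  \sum_(a <- addable_rows l) f (add_content l a) * dimr (incr_nth l a).

(* [add_content l b - 1] is the content of the removable box in row [b]. *)
Definition corner_diff (f : R -> R) l :=
  \sum_(a <- addable_rows l) f (add_content l a)
  - \sum_(b <- removable_rows l) f (add_content l b - 1).

Lemma add_content_remove_box l a b : is_part l -> removable l b ->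
  add_content (remove_box l b) a = add_content l a - (a == b)%:R.
Proof.
move=> pl rb; rewrite /add_content nth_remove_box //.
case: eqP => [->|_]; last by rewrite subn0 subr0.
by rewrite [RHS]addrAC natrB // (leq_ltn_trans _ rb).
Qed.

Lemma trans_sum_rec m f l : l \in partitions m.+1 ->
  trans_sum f l = corner_diff f l * dimr l +
    \sum_(b <- removable_rows l) trans_sum f (remove_box l b).
Proof.
rewrite mem_partitions => /andP[pl /eqP sl].
have size_l : (size l <= m.+1)%N by rewrite -sl size_le_sumn_part.
pose X a b := if is_part (incr_nth l a) && removable (incr_nth l a) b
  then f (add_content l a) * dimr (remove_box (incr_nth l a) b) else 0.
pose Y a b := if removable l b && is_part (incr_nth (remove_box l b) a)
  then f (add_content (remove_box l b) a) * dimr (incr_nth (remove_box l b) a) else 0.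
have eS : trans_sum f l = \sum_(a < m.+2) \sum_(b < m.+2) X a b.
  rewrite /trans_sum (big_addable_rows _ (N := m.+2)) // big_mkcond.
  apply: eq_bigr => a _; rewrite andbT /X; case: ifP => pa; last by rewrite big1.
  have Pa : incr_nth l a \in partitions m.+2 by rewrite mem_partitions pa sumn_incr_nth sl eqxx.
  rewrite (dim_remove_boxE _ Pa) mulr_sumr (big_removable_rows _ (N := m.+2)) //.
    by rewrite big_mkcond; apply: eq_bigr => b _; rewrite andbT; case: ifP; rewrite ?mulr0.
  by rewrite size_incr_nth; case: ifP => _; [exact: leqW | exact: ltn_ord].
have eT : \sum_(b <- removable_rows l) trans_sum f (remove_box l b) =
          \sum_(a < m.+2) \sum_(b < m.+2) Y a b.
  rewrite (big_removable_rows _ (N := m.+2)) 1?leqW // exchange_big big_mkcond.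
  apply: eq_bigr => b _ /=; rewrite andbT /Y; case: ifP => rb; last by rewrite big1.
  rewrite /trans_sum (big_addable_rows _ (N := m.+2)) ?is_part_remove_box //.
    by rewrite big_mkcond; apply: eq_bigr => a _; rewrite andbT; case: ifP.
  exact: leq_ltn_trans (size_remove_box pl rb) _.
have eP : corner_diff f l * dimr l = \sum_(a < m.+2) X a a - \sum_(a < m.+2) Y a a.
  rewrite /corner_diff mulrBl !mulr_suml (big_addable_rows _ (N := m.+2)) //.
  rewrite (big_removable_rows _ (N := m.+2)) 1?leqW // big_mkcond [X in _ - X]big_mkcond.
  congr (_ - _); apply: eq_bigr => a _; rewrite andbT /X /Y.
    by case: ifP => // pa; rewrite removable_incr_nth // incr_nthK.
  by case: ifP => // ra; rewrite remove_boxK // pl add_content_remove_box // eqxx.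
rewrite eS eT eP -sumr_offdiag_eq ?subrK // => a b ab; rewrite /X /Y.
rewrite addable_removableC //; case: ifP => // /andP[rb pa].
by rewrite -remove_box_incr_nthC ?add_content_remove_box ?(negbTE ab) ?subr0 //;
  move: (addable_removableC pl ab); rewrite rb pa => /andP[].
Qed.

End TransitionSums.

Section BoxSums.
Variable R : comPzRingType.
Implicit Types (f g : R -> R) (l : seq nat).

Definition box_sum g l :=
  \sum_(0 <= i < size l) \sum_(0 <= j < nth 0%N l i) g (j%:R - i%:R).

Definition diff2 f x := f (x + 1) - f x - (f x - f (x - 1)).

Lemma box_sum_telescope f l :
  f 0 + box_sum (diff2 f) l =
  \sum_(0 <= i < size l) (f (add_content R l i) - f (add_content R l i - 1))
  + f (add_content R l (size l)).
Proof.
have row i : \sum_(0 <= j < nth 0%N l i) diff2 f (j%:R - i%:R) =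
    (f (add_content R l i) - f (add_content R l i - 1)) - (f (- i%:R) - f (- i%:R - 1)).
  rewrite (@telescope_sumr_eq _ 0 _ (fun j : nat => f (j%:R - i%:R) - f (j%:R - i%:R - 1))) //.
    by rewrite sub0r.
  move=> j _; rewrite /diff2 (_ : j.+1%:R - i%:R = j%:R - i%:R + 1) ?addrK //.
  by rewrite -natr1 addrAC.
have col : \sum_(0 <= i < size l) (f (- i%:R) - f (- i%:R - 1)) = f 0 - f (- (size l)%:R).
  rewrite (@telescope_sumr_eq _ 0 _ (fun i : nat => - f (- i%:R))) //.
    by rewrite oppr0 opprK addrC.
  by move=> i _; rewrite -natr1 opprD opprK addrC.
rewrite /box_sum (eq_bigr _ (fun i _ => row i)) sumrB col /add_content nth_default //.
by rewrite sub0r; ring.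
Qed.

Lemma corner_diff_rows f l : is_part l ->
  corner_diff f l = \sum_(0 <= i < (size l).+1) f (add_content R l i)
                    - \sum_(0 <= i < size l) f (add_content R l i - 1).
Proof.
move=> pl; have iotaE n : iota 0 n = index_iota 0 n by rewrite /index_iota subn0.
rewrite /corner_diff /addable_rows /removable_rows !big_filter !iotaE.
rewrite [X in _ = X - _](bigID (fun a => is_part (incr_nth l a))) /=.
rewrite [X in _ = _ - X](bigID (removable l)) /=.
suff -> : \sum_(0 <= a < (size l).+1 | ~~ is_part (incr_nth l a)) f (add_content R l a) =
          \sum_(0 <= b < size l | ~~ removable l b) f (add_content R l b - 1) by rewrite opprD addrACA subrr addr0.
rewrite big_mkcond big_nat_recl // is_part_incr_nth //= add0r [RHS]big_mkcond.
apply: eq_bigr => b _; rewrite is_part_incr_nth //=; case: ifP => //= rb.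
have eb : nth 0%N l b.+1 = nth 0%N l b by apply/eqP; rewrite eqn_leq part_nthS_le // leqNgt rb.
by rewrite /add_content eb -natr1 opprD addrA.
Qed.

Lemma corner_diffE f l : is_part l -> corner_diff f l = f 0 + box_sum (diff2 f) l.
Proof.
move=> pl; rewrite corner_diff_rows // box_sum_telescope big_nat_recr //= sumrB.
by rewrite addrAC.
Qed.

Lemma eq_box_sum g1 g2 l : g1 =1 g2 -> box_sum g1 l = box_sum g2 l.
Proof. by move=> eg; apply: eq_bigr => i _; apply: eq_bigr => j _. Qed.

Lemma box_sum_affine (a b : R) g l :
  box_sum (fun x => a * g x + b) l = a * box_sum g l + b * (sumn l)%:R.
Proof.
rewrite /box_sum sumnE (big_nth 0%N) natr_sum !mulr_sumr -big_split /=.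
by apply: eq_bigr => i _; rewrite big_split -mulr_sumr sumr_const_nat subn0 mulr_natr.
Qed.

Lemma corner_diff_diff2 f (a b : R) g l : diff2 f =1 (fun x => a * g x + b) -> is_part l ->
  corner_diff f l = f 0 + a * box_sum g l + b * (sumn l)%:R.
Proof. by move=> df pl; rewrite corner_diffE // (eq_box_sum _ df) box_sum_affine addrA. Qed.

Lemma box_sum_incr_nth g l a : (a <= size l)%N ->
  box_sum g (incr_nth l a) = box_sum g l + g (add_content R l a).
Proof.
move=> le_a; have widen l' : (size l' <= (size l).+1)%N -> box_sum g l' =
    \sum_(0 <= i < (size l).+1) \sum_(0 <= j < nth 0%N l' i) g (j%:R - i%:R).
  move=> le_l'; rewrite /box_sum (big_nat_widen _ _ _ _ _ le_l') big_mkcond /=.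
  by apply: eq_bigr => i _; case: ltnP => // i_ge; rewrite nth_default // big_geq.
rewrite !widen ?size_incr_nth; [|lia|by case: ifP; lia].
have a_in : a \in index_iota 0 (size l).+1 by rewrite mem_index_iota ltnS.
rewrite (bigD1_seq a) ?iota_uniq // [in RHS](bigD1_seq a) ?iota_uniq //=.
rewrite nth_incr_nth eqxx add1n big_nat_recr //= -!addrA; congr (_ + _).
rewrite addrC; congr (_ + _).
by apply: eq_bigr => i ia; rewrite nth_incr_nth eq_sym (negbTE ia).
Qed.

End BoxSums.

(** * Plancherel averages *)

Section PlancherelSums.
Variable R : comPzRingType.
Implicit Types (f g : R -> R) (l : seq nat).
Local Notation dimr l := ((Defs.dim l)%:R : R).

Lemma trans_sum_nil f : trans_sum f [::] = f 0.
Proof. by rewrite /trans_sum /addable_rows /= big_seq1 /add_content dim1 subrr mulr1. Qed.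

Lemma trans_sum_affine (a : R) g1 g2 l :
  trans_sum (fun x => a * g1 x + g2 x) l = a * trans_sum g1 l + trans_sum g2 l.
Proof.
by rewrite /trans_sum mulr_sumr -big_split; apply: eq_bigr => i _; rewrite /= mulrDl mulrA.
Qed.

Lemma trans_sum_eq_dim f (c : nat -> R) : f 0 = c 0%N ->
  (forall m l, l \in partitions m.+1 -> corner_diff f l = c m.+1 - c m) ->
  forall m l, l \in partitions m -> trans_sum f l = c m * dimr l.
Proof.
move=> f0 df; elim=> [|m IH] l Pl.
  by move: Pl; rewrite partitions0 inE => /eqP ->; rewrite trans_sum_nil dim_nil mulr1.
rewrite (trans_sum_rec _ Pl) (df _ _ Pl).
suff -> : \sum_(b <- removable_rows l) trans_sum f (remove_box l b) = c m * dimr l.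
  by rewrite mulrBl subrK.
rewrite (dim_remove_boxE _ Pl) mulr_sumr.
move: Pl; rewrite mem_partitions => /andP[pl /eqP sl].
apply: eq_big_seq => b; rewrite mem_removable_rows // => rb; apply: IH.
by rewrite mem_partitions is_part_remove_box // sumn_remove_box // sl eqxx.
Qed.

Lemma trans_sum1 m l : l \in partitions m -> trans_sum (fun _ : R => 1) l = m.+1%:R * dimr l.
Proof.
apply: (trans_sum_eq_dim (c := fun m => m.+1%:R)) => // {}m {}l; rewrite mem_partitions.
case/andP=> pl _; rewrite (corner_diff_diff2 (a := 0) (b := 0) (g := id)) //.
  by rewrite -natr1; ring.
by move=> x; rewrite /diff2; ring.
Qed.

Lemma trans_sum_id m l : l \in partitions m -> trans_sum (@id R) l = 0.
Proof.
move=> Pl; rewrite (trans_sum_eq_dim (c := fun=> 0) _ _ Pl) ?mul0r // => k l'.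
rewrite mem_partitions => /andP[pl' _]; rewrite (corner_diff_diff2 (a := 0) (b := 0) (g := id)) //.
  by rewrite subrr; ring.
by move=> x; rewrite /diff2; ring.
Qed.

Lemma trans_sum_sqr m l : l \in partitions m ->
  trans_sum (fun x => x ^+ 2) l = m%:R * m.+1%:R * dimr l.
Proof.
apply: (trans_sum_eq_dim (c := fun m => m%:R * m.+1%:R)); first by rewrite mul0r expr0n.
move=> {}m {}l; rewrite mem_partitions => /andP[pl /eqP sl].
rewrite (corner_diff_diff2 (a := 0) (b := 2) (g := id)) // ?sl.
  by rewrite -!natr1; ring.
by move=> x; rewrite /diff2; ring.
Qed.

Definition plancherel_sum m (H : seq nat -> R) :=
  \sum_(l <- partitions m) dimr l ^+ 2 * H l.

Lemma plancherel_sumS m H h (k : R) :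
  (forall l a, l \in partitions m -> is_part (incr_nth l a) ->
     H (incr_nth l a) = H l + h l (add_content R l a)) ->
  (forall l, l \in partitions m -> trans_sum (h l) l = k * dimr l) ->
  plancherel_sum m.+1 H = m.+1%:R * plancherel_sum m H + k * plancherel_sum m (fun=> 1).
Proof.
move=> dH th; rewrite /plancherel_sum.
under eq_bigr do rewrite expr2 -mulrA.
rewrite sum_dim_partitionsS !mulr_sumr -big_split; apply: eq_big_seq => l Pl /=.
have pl : is_part l by move: Pl; rewrite mem_partitions => /andP[].
transitivity (dimr l * (H l * trans_sum (fun=> 1) l + trans_sum (h l) l)).
  congr (_ * _); rewrite /trans_sum mulr_sumr -big_split; apply: eq_big_seq => a.
  by rewrite mem_addable_rows // => pa /=; rewrite dH //; ring.
by rewrite (trans_sum1 Pl) th //; ring.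
Qed.

Lemma sum_dim_sqr m : plancherel_sum m (fun=> 1) = m`!%:R.
Proof.
elim: m => [|m IH]; first by rewrite /plancherel_sum partitions0 big_seq1 dim_nil expr1n mulr1.
rewrite (plancherel_sumS (h := fun _ _ => 0) (k := 0)) => [|l a _ _|l _].
- by rewrite IH factS natrM; ring.
- by rewrite addr0.
- by rewrite /trans_sum big1 ?mul0r // => a _; rewrite mul0r.
Qed.

Lemma plancherel_sum_binom2 H h : H [::] = 0 ->
  (forall m l a, l \in partitions m -> is_part (incr_nth l a) ->
     H (incr_nth l a) = H l + h l (add_content R l a)) ->
  (forall m l, l \in partitions m -> trans_sum (h l) l = m%:R * m.+1%:R * dimr l) ->
  forall m, plancherel_sum m H = m`!%:R * 'C(m, 2)%:R.
Proof.
move=> H0 dH th; elim=> [|m IH].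
  by rewrite /plancherel_sum partitions0 big_seq1 H0 mulr0 bin0n mulr0.
rewrite (plancherel_sumS (h := h) (k := m%:R * m.+1%:R)) => [||l]; last 2 first.
- exact: dH.
- exact: th.
by rewrite IH sum_dim_sqr binS bin1 factS !natrM natrD; ring.
Qed.

Lemma plancherel_sum_box_sum_sqr m :
  plancherel_sum m (box_sum (fun x => x ^+ 2)) = m`!%:R * 'C(m, 2)%:R.
Proof.
apply: (plancherel_sum_binom2 (h := fun _ x => x ^+ 2)) => [|k l a Pl pa|k l Pl].
- by rewrite /box_sum big_nil.
- rewrite box_sum_incr_nth //; apply: incr_nth_part_le_size pa.
  by move: Pl; rewrite mem_partitions => /andP[].
- exact: trans_sum_sqr.
Qed.

Lemma plancherel_sum_content_sqr m :
  plancherel_sum m (fun l => box_sum id l ^+ 2) = m`!%:R * 'C(m, 2)%:R.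
Proof.
apply: (plancherel_sum_binom2 (h := fun l x => 2 * box_sum id l * x + x ^+ 2)).
- by rewrite /box_sum big_nil expr0n.
- move=> k l a; rewrite mem_partitions => /andP[pl _] pa.
  by rewrite box_sum_incr_nth ?(incr_nth_part_le_size pl pa) //; ring.
- move=> k l Pl; rewrite trans_sum_affine (trans_sum_id Pl) (trans_sum_sqr Pl).
  by rewrite mulr0 add0r.
Qed.

Lemma natr_bin2 n : 2 * 'C(n, 2)%:R = n%:R * (n%:R - 1) :> R.
Proof.
elim: n => [|n IH]; first by rewrite bin0n mulr0 mul0r.
by rewrite binS bin1 natrD mulrDr IH -natr1; ring.
Qed.

Lemma sum_dim_trans_sum_exp4 m :
  \sum_(l <- partitions m) dimr l * trans_sum (fun x => x ^+ 4) l =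
  m`!%:R * (m%:R * m.+1%:R * (2 * m%:R - 1)).
Proof.
elim: m => [|m IH].
  by rewrite partitions0 big_seq1 trans_sum_nil expr0n /= !(mulr0, mul0r).
have cd4 L : L \in partitions m.+1 -> corner_diff (fun x => x ^+ 4) L =
    12 * box_sum (fun x => x ^+ 2) L + 2 * m.+1%:R.
  rewrite mem_partitions => /andP[pL /eqP sL].
  rewrite (corner_diff_diff2 (a := 12) (b := 2) (g := fun x => x ^+ 2)) ?sL //.
    by rewrite expr0n add0r.
  by move=> x; rewrite /diff2; ring.
transitivity (\sum_(L <- partitions m.+1) (12 * (dimr L ^+ 2 * box_sum (fun x => x ^+ 2) L)
    + 2 * m.+1%:R * (dimr L ^+ 2 * 1)
    + \sum_(b <- removable_rows L) dimr L * trans_sum (fun x => x ^+ 4) (remove_box L b))).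
  apply: eq_big_seq => L PL; rewrite (trans_sum_rec _ PL) cd4 // mulrDr -mulr_sumr.
  by congr (_ + _); ring.
rewrite !big_split /= (sum_remove_box_add_box _
  (fun L l _ => dimr L * trans_sum (fun x => x ^+ 4) l)) -!mulr_sumr.
have := sum_dim_sqr m.+1; have := plancherel_sum_box_sum_sqr m.+1.
rewrite /plancherel_sum => -> ->.
have -> : \sum_(l <- partitions m) \sum_(a <- addable_rows l)
    dimr (incr_nth l a) * trans_sum (fun x => x ^+ 4) l =
    m.+1%:R * \sum_(l <- partitions m) dimr l * trans_sum (fun x => x ^+ 4) l.
  rewrite mulr_sumr; apply: eq_big_seq => l Pl; rewrite -mulr_suml mulrA -(trans_sum1 Pl).
  by congr (_ * _); apply: eq_bigr => a _; rewrite mul1r.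
rewrite IH (_ : 12 * ((m.+1)`!%:R * 'C(m.+1, 2)%:R) =
                6 * (m.+1)`!%:R * (2 * 'C(m.+1, 2)%:R)); last by ring.
by rewrite natr_bin2 factS natrM -!natr1; ring.
Qed.

End PlancherelSums.

Lemma natr_fact_neq0 (R : numDomainType) n : n`!%:R != 0 :> R.
Proof. by rewrite pnatr_eq0 -lt0n fact_gt0. Qed.

Section KerovProcess.
Variable R : rcfType.
Implicit Types (l s : seq nat).
Local Notation dimr l := ((Defs.dim l)%:R : R).

Lemma kerov_path_prob_take s k : (0 < k <= size s)%N ->
  kerov_path_prob R k (path_of s) =
  (lattice_word (take k s))%:R * dimr (build (take k s)) / k`!%:R.
Proof.
case: k => [//|k] /=; elim: k => [|k IH] lt_ks.
  rewrite /kerov_path_prob big_geq // mulr1 divr1 /path_of.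
  case: s lt_ks => [//|[|x] s] _ /=; first by rewrite take0 dim1 mulr1.
  by rewrite take0 /lattice_word /build /is_part /= andbF mul0r.
rewrite /kerov_path_prob big_nat_recr //= mulrA -/(kerov_path_prob R k.+1 _) IH 1?ltnW //.
rewrite /path_of (take_nth 0%N lt_ks) build_rcons lattice_word_rcons build_rcons.
case lt: (lattice_word _); last by rewrite !mul0r.
have pl := lattice_word_part lt; have dim_gt0 := dim_gt0 pl.
rewrite /kerov_trans adds_box_incr_nth //; case: ifP => pa; last by rewrite mulr0 /= !mul0r.
rewrite [(k.+2)`!]factS natrM [((k.+2 * _)%N)%:R]natrM /= !mul1r.
have d0 : dimr (build (take k.+1 s)) != 0 by rewrite pnatr_eq0 -lt0n.
by field; rewrite d0 natr_fact_neq0 /= -natrD pnatr_eq0.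
Qed.

Lemma kerov_E_lattice n (F : (nat -> seq nat) -> R) : (0 < n)%N ->
  kerov_E R n F =
  (n`!%:R)^-1 * \sum_(s <- lattice_words n) dimr (build s) * F (path_of s).
Proof.
move=> n_gt0; rewrite -(big_lattice_tuples _ (N := n) (fun s => dimr (build s) * F (path_of s))) //.
rewrite mulr_sumr big_mkcond; apply: eq_bigr => w _.
rewrite kerov_path_prob_take ?size_map ?size_tuple ?n_gt0 ?leqnn //.
rewrite take_oversize ?size_map ?size_tuple //.
by case: ifP => _; rewrite ?mul0r // mul1r mulrAC mulrC mulrA.
Qed.

Lemma kerov_E_last_step m (Psi : seq nat -> seq nat -> R) :
  kerov_E R m.+1 (fun lam => Psi (lam m) (lam m.+1)) =
  ((m.+1)`!%:R)^-1 * \sum_(l <- partitions m) dimr l *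
     \sum_(a <- addable_rows l) dimr (incr_nth l a) * Psi l (incr_nth l a).
Proof.
rewrite kerov_E_lattice // lattice_wordsS big_allpairs_dep -sum_lattice_words_build.
congr (_ * _); apply: eq_big_seq => s /lattice_wordsP[_ ss]; apply: eq_bigr => a _.
rewrite /path_of -cats1 (take_size_cat _ ss) take_oversize ?size_cat ?ss ?addn1 //.
by rewrite cats1 build_rcons.
Qed.

Lemma added_content_incr_nth l a : is_part l -> is_part (incr_nth l a) ->
  added_content R l (incr_nth l a) = add_content R l a.
Proof.
move=> pl pa; have lt_a : (a < size (incr_nth l a))%N.
  by rewrite size_incr_nth; case: ifP => //; rewrite ltnS (incr_nth_part_le_size pl pa).
rewrite /added_content (eq_find (a2 := pred1 a)) => [|i]; last first.
  rewrite /= nth_incr_nth; case: (eqVneq i a) => [->|_].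
    by rewrite add1n neq_ltn ltnSn.
  by rewrite add0n eqxx.
rewrite -/(index a _); have -> : index a (iota 0%N (size (incr_nth l a))) = a.
  by rewrite -{1}[a]add0n -(nth_iota 0 0 lt_a) index_uniq ?iota_uniq ?size_iota.
by rewrite nth_incr_nth eqxx add1n /add_content -!natr1 opprD addrACA subrr addr0.
Qed.

Lemma kerov_E_content_moment m (h : seq nat -> R) (g : R -> R) :
  kerov_E R m.+1 (fun lam => h (lam m) * g (added_content R (lam m) (lam m.+1))) =
  ((m.+1)`!%:R)^-1 * \sum_(l <- partitions m) dimr l * (h l * trans_sum g l).
Proof.
rewrite (kerov_E_last_step m (fun l L => h l * g (added_content R l L))); congr (_ * _).
apply: eq_big_seq => l; rewrite mem_partitions => /andP[pl _]; congr (_ * _).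
rewrite /trans_sum mulr_sumr; apply: eq_big_seq => a; rewrite mem_addable_rows // => pa.
by rewrite added_content_incr_nth //; ring.
Qed.

Lemma eq_kerov_E n (F G : (nat -> seq nat) -> R) : F =1 G -> kerov_E R n F = kerov_E R n G.
Proof. by move=> eFG; apply: eq_bigr => w _; rewrite eFG. Qed.

Lemma kerov_E_scale n (c : R) F : kerov_E R n (fun lam => c * F lam) = c * kerov_E R n F.
Proof. by rewrite /kerov_E mulr_sumr; apply: eq_bigr => w _; rewrite mulrCA. Qed.

Lemma kerov_E_add n F G :
  kerov_E R n (fun lam => F lam + G lam) = kerov_E R n F + kerov_E R n G.
Proof. by rewrite /kerov_E -big_split; apply: eq_bigr => w _; rewrite mulrDr. Qed.

Lemma kerov_E_le n F G : (forall lam, F lam <= G lam) -> kerov_E R n F <= kerov_E R n G.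
Proof.
move=> FG; apply: ler_sum => w _; apply: ler_wpM2l (FG _).
rewrite mulr_ge0 ?ler0n // prodr_ge0 // => j _.
by rewrite /kerov_trans; case: ifP => // _; rewrite divr_ge0 ?ler0n.
Qed.

Lemma content_sum_box_sum l : content_sum R l = box_sum id l.
Proof.
rewrite /content_sum /box_sum big_mkord; apply: eq_bigr => i _.
by rewrite big_add1; apply: eq_bigr => j _; rewrite /= -!natr1 opprD addrACA subrr addr0.
Qed.

Lemma kerov_E_X2 m : kerov_E R m.+1 (fun lam => X_n R m.+1 lam ^+ 2) = m%:R.
Proof.
rewrite (@eq_kerov_E _ _ (fun lam => 1 * added_content R (lam m) (lam m.+1) ^+ 2)).
  rewrite (kerov_E_content_moment m (fun=> 1) (fun x => x ^+ 2)).
  rewrite (eq_big_seq (fun l => m%:R * m.+1%:R * (dimr l ^+ 2 * 1))) => [|l Pl].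
    have := sum_dim_sqr R m; rewrite /plancherel_sum -mulr_sumr => ->.
    by rewrite factS natrM; field; rewrite natr_fact_neq0 addrC natr1 pnatr_eq0.
  by rewrite (trans_sum_sqr _ Pl); ring.
by move=> lam; rewrite mul1r.
Qed.

Lemma kerov_E_X4 m : kerov_E R m.+1 (fun lam => X_n R m.+1 lam ^+ 4) = m%:R * (2 * m%:R - 1).
Proof.
rewrite (@eq_kerov_E _ _ (fun lam => 1 * added_content R (lam m) (lam m.+1) ^+ 4)).
  rewrite (kerov_E_content_moment m (fun=> 1) (fun x => x ^+ 4)).
  under eq_bigr do rewrite mul1r.
  rewrite sum_dim_trans_sum_exp4 factS natrM.
  by field; rewrite natr_fact_neq0 addrC natr1 pnatr_eq0.
by move=> lam; rewrite mul1r.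
Qed.

Lemma kerov_E_T2X2 m : (1 < m)%N ->
  kerov_E R m.+1 (fun lam => T_nm1 R m.+1 lam ^+ 2 * X_n R m.+1 lam ^+ 2) = m%:R.
Proof.
move=> m_gt1; set C : R := 'C(m, 2)%:R.
have C_gt0 : 0 < C by rewrite ltr0n bin_gt0.
rewrite (kerov_E_content_moment m (fun l => ((Num.sqrt C)^-1 * content_sum R l) ^+ 2)
  (fun x => x ^+ 2)).
rewrite (eq_big_seq (fun l => m%:R * m.+1%:R / C * (dimr l ^+ 2 * box_sum id l ^+ 2)))
  => [|l Pl]; last first.
  rewrite (trans_sum_sqr _ Pl) content_sum_box_sum exprMn exprVn sqr_sqrtr ?ltW //.
  by rewrite mulrC; ring.
have := plancherel_sum_content_sqr R m; rewrite /plancherel_sum -mulr_sumr => ->.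
rewrite factS natrM -/C; field.
by rewrite natr_fact_neq0 gt_eqF // addrC natr1 pnatr_eq0.
Qed.

Lemma kerov_E_le_mul_X2 m F U : (0 < m)%N ->
  (forall lam, F lam <= U lam * X_n R m.+1 lam ^+ 2) ->
  kerov_E R m.+1 (fun lam => U lam ^+ 2) = m%:R ->
  kerov_E R m.+1 F <= m%:R * Num.sqrt (2 * m%:R - 1).
Proof.
move=> m_gt0 FUX EU2; set s := Num.sqrt _.
have m_ge1 : 1 <= m%:R :> R by rewrite ler1n.
have s_gt0 : 0 < s by rewrite sqrtr_gt0; lra.
have s2 : s ^+ 2 = 2 * m%:R - 1 by rewrite sqr_sqrtr //; lra.
rewrite -(ler_pM2l (_ : 0 < 2 * s)) ?mulr_gt0 // -kerov_E_scale.
apply: le_trans (@kerov_E_le m.+1 _ (fun lam => s ^+ 2 * U lam ^+ 2 + X_n R m.+1 lam ^+ 4) _) _.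
  move=> lam; apply: le_trans (ler_wpM2l (ltW _) (FUX lam)) _; first by rewrite mulr_gt0.
  rewrite -subr_ge0 (_ : _ - _ = (s * U lam - X_n R m.+1 lam ^+ 2) ^+ 2) ?sqr_ge0 //.
  by ring.
rewrite kerov_E_add kerov_E_scale EU2 kerov_E_X4 -s2.
by rewrite (_ : _ + _ = 2 * s * (m%:R * s)) //; ring.
Qed.

End KerovProcess.

Theorem lemma4 (R : rcfType) (n : nat) : (3 <= n)%N ->
  kerov_E R n (fun lam => `|X_n R n lam| ^+ 3)
    <= (n.-1)%:R * Num.sqrt (2 * n%:R - 3)
  /\
  kerov_E R n (fun lam => `|T_nm1 R n lam| * `|X_n R n lam| ^+ 3)
    <= (n.-1)%:R * Num.sqrt (2 * n%:R - 3).
Proof.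
case: n => [//|m] m_ge2; rewrite [m.+1.-1]/=.
have -> : 2 * m.+1%:R - 3 = 2 * m%:R - 1 :> R by rewrite -natr1; ring.
have normX3 lam : `|X_n R m.+1 lam| ^+ 3 = `|X_n R m.+1 lam| * X_n R m.+1 lam ^+ 2.
  by rewrite exprS real_normK ?num_real.
have m_gt0 : (0 < m)%N by apply: ltnW.
split.
  apply: (kerov_E_le_mul_X2 (U := fun lam => `|X_n R m.+1 lam|)) => // [lam|].
    by rewrite normX3.
  by rewrite -(kerov_E_X2 R m); apply: eq_kerov_E => lam; rewrite real_normK ?num_real.
apply: (kerov_E_le_mul_X2 (U := fun lam => `|T_nm1 R m.+1 lam| * `|X_n R m.+1 lam|)) => // [lam|].
  by rewrite normX3 mulrA.
rewrite -(kerov_E_T2X2 R m_ge2); apply: eq_kerov_E => lam.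
by rewrite exprMn !real_normK ?num_real.
Qed.
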